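(* Let $M\ge3$, $\phi\in\mathrm{Hyp}^M$, $z_1\in\Sigma$, $A_1:=A(z_1)$, $\mu\ge1$, and let $K$ be sufficiently large (larger than some absolute constant). Let $h$ be the function from the preceding lemma, so that $\mathbf t(h(v,y),y)=v$ with $\mathbf t(z):=t^2_{z_1}(z_1,z)$. Define $$R_I:=\{z\in\Sigma:|t^2_{z_1}(z_1,z)|\le100\mu^{1/2}K^{-1}\},\qquad R_{II}:=\{z\in\Sigma:|A(z)-A_1|\le\mu^{1/2}K^{-3/4}\}.$$ Then $R_I$ is the union of the traces in $\Sigma$ of the curves $y\mapsto(h(v,y),y)$, $y\in[-1,1]$, with $|v|\le100\mu^{1/2}K^{-1}$; and if $z=(h(v,y),y)\in R_I\cap R_{II}$, then the tangent vector $X_z:=(h_y(v,y),1)$ satisfies $$|X_z-(-A_1,1)|\le3\mu^{1/2}K^{-3/4}.$$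
   Context: $\Sigma:=[-1,1]^2$, $2\Sigma:=[-2,2]^2$. $\mathrm{Hyp}^M$ ($M\ge3$) is the set of $\phi\in C^M(\Sigma)$ extending to a $C^M$ function on $2\Sigma$ with $\phi(0)=0$, $\nabla\phi(0)=0$, $D^2\phi(0)=\begin{pmatrix}0&1\\1&0\end{pmatrix}$, and $\sup_{2\Sigma}|\partial_x^a\partial_y^b\phi|\le10^{-5}$ for $3\le a+b\le M$. $H:=\phi_{xy}^2-\phi_{xx}\phi_{yy}$, $A:=\frac{\phi_{yy}}{\phi_{xy}+\sqrt H}$, and $t^2_{z_1}(z_1,z):=\phi_y(z)-\phi_y(z_1)-A(z_1)(\phi_x(z)-\phi_x(z_1))$. The preceding lemma provides $h:[\alpha,\beta]\times[-1,1]\to\mathbb R$ ($\alpha,\beta$ the min and max of $\mathbf t$ on $\Sigma$) with $\mathbf t(h(v,y),y)=v$, such that $(v,y)\mapsto(h(v,y),y)$ is a diffeomorphism onto a set containing $\Sigma$. *)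

From Stdlib Require Import Reals Lra List.
From Coquelicot Require Import Coquelicot.
Open Scope R_scope.

Definition Sigma (x y : R) : Prop := -1 <= x <= 1 /\ -1 <= y <= 1.
Definition Int2Sigma (x y : R) : Prop := -2 < x < 2 /\ -2 < y < 2.

Definition dX (f : R -> R -> R) : R -> R -> R := fun x y => Derive (fun u => f u y) x.
Definition dY (f : R -> R -> R) : R -> R -> R := fun x y => Derive (fun u => f x u) y.

(* iterated partial derivative along a word: true = d/dx, false = d/dy;
   the head of the word is applied last *)
Fixpoint dword (w : list bool) (f : R -> R -> R) : R -> R -> R :=
  match w with
  | nil => f
  | b :: w' => (if b then dX else dY) (dword w' f)
  end.

Definition pd (a b : nat) (f : R -> R -> R) : R -> R -> R :=
  dword (repeat true a ++ repeat false b) f.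

Definition unif_cont_on (D : R -> R -> Prop) (f : R -> R -> R) : Prop :=
  forall eps, 0 < eps -> exists delta, 0 < delta /\
    forall x y u w, D x y -> D u w -> Rabs (u - x) < delta -> Rabs (w - y) < delta ->
      Rabs (f u w - f x y) < eps.

Definition cont_within2 (D : R -> R -> Prop) (f : R -> R -> R) (x y : R) : Prop :=
  forall eps, 0 < eps -> exists delta, 0 < delta /\
    forall u w, D u w -> Rabs (u - x) < delta -> Rabs (w - y) < delta ->
      Rabs (f u w - f x y) < eps.

Definition has_deriv_within (D : R -> Prop) (f : R -> R) (x l : R) : Prop :=
  forall eps, 0 < eps -> exists delta, 0 < delta /\
    forall u, D u -> Rabs (u - x) < delta ->
      Rabs (f u - f x - l * (u - x)) <= eps * Rabs (u - x).

(* C^M on the closed square 2Sigma: all partial derivatives of order <= M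
   exist on the interior (-2,2)^2 and extend continuously to the closed square
   (equivalently, are uniformly continuous on the bounded open square). *)
Definition CM_2Sigma (M : nat) (f : R -> R -> R) : Prop :=
  (forall w : list bool, (length w < M)%nat -> forall x y, Int2Sigma x y ->
      ex_derive (fun u => dword w f u y) x /\ ex_derive (fun u => dword w f x u) y) /\
  (forall w : list bool, (length w <= M)%nat -> unif_cont_on Int2Sigma (dword w f)).

Definition Hyp (M : nat) (phi : R -> R -> R) : Prop :=
  CM_2Sigma M phi /\
  phi 0 0 = 0 /\ dX phi 0 0 = 0 /\ dY phi 0 0 = 0 /\
  dX (dX phi) 0 0 = 0 /\ dX (dY phi) 0 0 = 1 /\
  dY (dX phi) 0 0 = 1 /\ dY (dY phi) 0 0 = 0 /\
  (forall a b : nat, (3 <= a + b)%nat -> (a + b <= M)%nat ->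
     forall x y, Int2Sigma x y -> Rabs (pd a b phi x y) <= 1 / 100000).

Definition phi_x (phi : R -> R -> R) := dX phi.
Definition phi_y (phi : R -> R -> R) := dY phi.
Definition phi_xx (phi : R -> R -> R) := dX (dX phi).
Definition phi_yy (phi : R -> R -> R) := dY (dY phi).
Definition phi_xy (phi : R -> R -> R) := dX (dY phi).

Definition Hfun (phi : R -> R -> R) (x y : R) : R :=
  (phi_xy phi x y) ^ 2 - phi_xx phi x y * phi_yy phi x y.

Definition Afun (phi : R -> R -> R) (x y : R) : R :=
  phi_yy phi x y / (phi_xy phi x y + sqrt (Hfun phi x y)).

Definition t2 (phi : R -> R -> R) (x1 y1 x y : R) : R :=
  phi_y phi x y - phi_y phi x1 y1 - Afun phi x1 y1 * (phi_x phi x y - phi_x phi x1 y1).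

Definition Rect (alpha beta v y : R) : Prop := alpha <= v <= beta /\ -1 <= y <= 1.

(* The conclusions of the preceding lemma about h (with hy its partial
   derivative in y): t(h(v,y),y) = v, and (v,y) |-> (h(v,y),y) is a C^1
   diffeomorphism of [alpha,beta]x[-1,1] onto a set containing Sigma. *)
Definition lemma_h (phi : R -> R -> R) (x1 y1 alpha beta : R) (h hy : R -> R -> R) : Prop :=
  (forall v y, Rect alpha beta v y -> t2 phi x1 y1 (h v y) y = v) /\
  (forall v y v' y', Rect alpha beta v y -> Rect alpha beta v' y' ->
      h v y = h v' y' -> y = y' -> v = v') /\
  (forall x y, Sigma x y -> exists v, alpha <= v <= beta /\ h v y = x) /\
  (exists hv : R -> R -> R,
     (forall v y, Rect alpha beta v y ->
        has_deriv_within (fun u => alpha <= u <= beta) (fun u => h u y) v (hv v y) /\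
        has_deriv_within (fun u => -1 <= u <= 1) (fun u => h v u) y (hy v y) /\
        cont_within2 (Rect alpha beta) hv v y /\
        cont_within2 (Rect alpha beta) hy v y /\
        hv v y <> 0)).

From Stdlib Require Import Reals Lra Lia List.
From Coquelicot Require Import Coquelicot.
Open Scope R_scope.

(* The first claim (R_I is the union of the level curves y |-> (h(v,y),y),
   |v| small) is pure bookkeeping with t(h(v,y),y) = v and the surjectivity
   of (v,y) |-> (h(v,y),y) onto Sigma.
   For the tangent estimate, differentiate t(h(v,y),y) = v in y: the tangent
   (h_y, 1) is orthogonal to grad t = (phi_xy - A1 phi_xx, phi_yy - A1 phi_xy).  It then shows that for phi in Hyp^M the Hessian stays
   within 2 10^-5 of [[0,1],[1,0]] on Sigma (third derivatives are bounded by
   10^-5), so that A(z) is a small root of phi_xx A^2 - 2 phi_xy A + phi_yy.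
   A final algebraic identity gives |h_y + A1| <= 3 |A(z) - A1|, which is
   bounded by mu^{1/2} K^{-3/4} on R_II; any K0 works. *)

Lemma between_abs a b t : Rmin a b <= t <= Rmax a b -> Rabs (t - a) <= Rabs (b - a).
Proof.
intros Ht. destruct (Rle_dec a b).
- rewrite Rmin_left, Rmax_right in Ht by lra. rewrite !Rabs_right; lra.
- rewrite Rmin_right, Rmax_left in Ht by lra. rewrite !Rabs_left1; lra.
Qed.

Lemma Rabs_le_bounds x a : Rabs x <= a -> - a <= x <= a.
Proof. unfold Rabs; destruct (Rcase_abs x); lra. Qed.

Lemma mvt_abs_bound (f df : R -> R) a b B :
  (forall t, Rmin a b <= t <= Rmax a b -> is_derive f t (df t)) ->
  (forall t, Rmin a b <= t <= Rmax a b -> Rabs (df t) <= B) ->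
  Rabs (f b - f a) <= B * Rabs (b - a).
Proof.
intros Hd Hb.
destruct (MVT_gen f a b df) as [c [Hc ->]].
- intros t Ht; apply Hd; lra.
- intros t Ht. apply continuity_pt_filterlim.
  apply (ex_derive_continuous (K := R_AbsRing) (V := R_NormedModule)).
  eexists; apply Hd; exact Ht.
- rewrite Rabs_mult. apply Rmult_le_compat_r; [apply Rabs_pos | apply Hb; exact Hc].
Qed.

Lemma is_derive_sub_linear (f : R -> R) x l c :
  is_derive f x l -> is_derive (fun t => f t - c * t) x (l - c).
Proof.
intros H. auto_derive; [eexists; exact H |].
replace (Derive (fun x0 : R => f x0) x) with l by (symmetry; apply is_derive_unique, H).
ring.
Qed.

Lemma is_derive_eps f x l : is_derive f x l -> forall eps, 0 < eps -> exists d, 0 < d /\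
  forall u, Rabs (u - x) < d -> Rabs (f u - f x - l * (u - x)) <= eps * Rabs (u - x).
Proof.
intros H eps He. apply is_derive_Reals in H.
destruct (H eps He) as [d Hd]. exists d; split; [apply cond_pos |].
intros u Hu. destruct (Req_dec u x) as [-> | Hne].
- replace (f x - f x - l * (x - x)) with 0 by ring.
  replace (x - x) with 0 by ring. rewrite Rabs_R0; lra.
- assert (Hh : u - x <> 0) by lra.
  specialize (Hd (u - x) Hh Hu). replace (x + (u - x)) with u in Hd by ring.
  replace (f u - f x - l * (u - x)) with (((f u - f x) / (u - x) - l) * (u - x))
    by (field; exact Hh).
  rewrite Rabs_mult. apply Rmult_le_compat_r; [apply Rabs_pos | lra].
Qed.

Lemma partials_differentiable (F Fx : R -> R -> R) x0 y0 fy :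
  locally_2d (fun x u => is_derive (fun t => F t u) x (Fx x u)) x0 y0 ->
  continuity_2d_pt Fx x0 y0 ->
  is_derive (fun u => F x0 u) y0 fy ->
  differentiable_pt_lim F x0 y0 (Fx x0 y0) fy.
Proof.
intros [d0 HFx] HC Hfy eps.
assert (He2 : 0 < eps / 2) by (generalize (cond_pos eps); lra).
destruct (HC (mkposreal _ He2)) as [dc HC'].
destruct (is_derive_eps _ _ _ Hfy _ He2) as [dy [Hdy Hfy']].
assert (Hd : 0 < Rmin d0 (Rmin dc dy)).
{ repeat apply Rmin_glb_lt; auto; apply cond_pos. }
exists (mkposreal _ Hd). simpl. intros x u Hx Hu.
assert (Hm : Rmin d0 (Rmin dc dy) <= d0 /\ Rmin d0 (Rmin dc dy) <= dc
             /\ Rmin d0 (Rmin dc dy) <= dy).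
{ pose proof (Rmin_l d0 (Rmin dc dy)); pose proof (Rmin_r d0 (Rmin dc dy)).
  pose proof (Rmin_l dc dy); pose proof (Rmin_r dc dy). lra. }
destruct Hm as [Hle0 [Hlec Hley]].
assert (Hincx : Rabs ((F x u - Fx x0 y0 * x) - (F x0 u - Fx x0 y0 * x0))
                <= eps / 2 * Rabs (x - x0)).
{ apply (mvt_abs_bound (fun t => F t u - Fx x0 y0 * t) (fun t => Fx t u - Fx x0 y0)).
  - intros t Ht. pose proof (between_abs _ _ _ Ht).
    apply is_derive_sub_linear, HFx; lra.
  - intros t Ht. pose proof (between_abs _ _ _ Ht).
    apply Rlt_le, (HC' t u); lra. }
specialize (Hfy' u ltac:(lra)).
pose proof (Rmax_l (Rabs (x - x0)) (Rabs (u - y0))).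
pose proof (Rmax_r (Rabs (x - x0)) (Rabs (u - y0))).
replace (F x u - F x0 y0 - (Fx x0 y0 * (x - x0) + fy * (u - y0)))
  with (((F x u - Fx x0 y0 * x) - (F x0 u - Fx x0 y0 * x0))
        + (F x0 u - F x0 y0 - fy * (u - y0))) by ring.
eapply Rle_trans; [apply Rabs_triang |]. nra.
Qed.

Lemma chain_rule_within (F : R -> R -> R) (g : R -> R) (D : R -> Prop) y fx fy gy :
  has_deriv_within D g y gy ->
  differentiable_pt_lim F (g y) y fx fy ->
  has_deriv_within D (fun u => F (g u) u) y (fx * gy + fy).
Proof.
intros Hg HF eps He.
set (C := Rabs gy + 2).
assert (HC : 2 <= C) by (unfold C; pose proof (Rabs_pos gy); lra).
set (eg := Rmin 1 (eps / (2 * (Rabs fx + 1)))).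
assert (Heg : 0 < eg).
{ apply Rmin_glb_lt; [lra |]. apply Rdiv_lt_0_compat; [lra |].
  pose proof (Rabs_pos fx); lra. }
assert (Heg1 : eg <= 1) by apply Rmin_l.
assert (Hfxeg : Rabs fx * eg <= eps / 2).
{ assert (Hle : eg <= eps / (2 * (Rabs fx + 1))) by apply Rmin_r.
  pose proof (Rabs_pos fx).
  apply Rmult_le_compat_l with (r := Rabs fx + 1) in Hle; [| lra].
  replace ((Rabs fx + 1) * (eps / (2 * (Rabs fx + 1)))) with (eps / 2) in Hle
    by (field; lra).
  nra. }
assert (HeF : 0 < eps / (2 * C)) by (apply Rdiv_lt_0_compat; lra).
destruct (HF (mkposreal _ HeF)) as [dF HF']. simpl in HF'.
destruct (Hg eg Heg) as [dg [Hdg Hg']].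
assert (HdF : 0 < dF / C) by (apply Rdiv_lt_0_compat; [apply cond_pos | lra]).
exists (Rmin dg (dF / C)). split; [apply Rmin_glb_lt; lra |].
intros u Du Hu.
pose proof (Rmin_l dg (dF / C)); pose proof (Rmin_r dg (dF / C)).
specialize (Hg' u Du ltac:(lra)).
set (s := Rabs (u - y)) in *.
assert (Hs : 0 <= s) by apply Rabs_pos.
assert (Hgmove : Rabs (g u - g y) <= (Rabs gy + 1) * s).
{ replace (g u - g y) with ((g u - g y - gy * (u - y)) + gy * (u - y)) by ring.
  eapply Rle_trans; [apply Rabs_triang |]. rewrite Rabs_mult. fold s. nra. }
assert (HCs : C * s < dF).
{ assert (HsdF : s < dF / C) by lra.
  apply Rmult_lt_compat_l with (r := C) in HsdF; [| lra].
  replace (C * (dF / C)) with (pos dF) in HsdF by (field; lra). exact HsdF. }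
assert (HCs' : (Rabs gy + 1) * s <= C * s) by (apply Rmult_le_compat_r; unfold C; lra).
assert (Hgu : Rabs (g u - g y) < dF) by lra.
assert (Huy : Rabs (u - y) < dF) by (fold s; nra).
specialize (HF' (g u) u Hgu Huy).
assert (Hmax : Rmax (Rabs (g u - g y)) (Rabs (u - y)) <= C * s).
{ apply Rmax_lub; fold s; [lra | nra]. }
replace (F (g u) u - F (g y) y - (fx * gy + fy) * (u - y))
  with ((F (g u) u - F (g y) y - (fx * (g u - g y) + fy * (u - y)))
        + fx * (g u - g y - gy * (u - y))) by ring.
eapply Rle_trans; [apply Rabs_triang |]. rewrite Rabs_mult. fold s.
assert (eps / (2 * C) * Rmax (Rabs (g u - g y)) (Rabs (u - y)) <= eps / 2 * s).
{ apply Rle_trans with (eps / (2 * C) * (C * s)); [apply Rmult_le_compat_l; lra |].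
  right; field; lra. }
assert (Rabs fx * Rabs (g u - g y - gy * (u - y)) <= eps / 2 * s).
{ apply Rle_trans with (Rabs fx * (eg * s)); [| nra].
  apply Rmult_le_compat_l; [apply Rabs_pos | exact Hg']. }
lra.
Qed.

Lemma deriv_within_const (f : R -> R) a b c y l :
  a < b -> a <= y <= b -> (forall u, a <= u <= b -> f u = c) ->
  has_deriv_within (fun u => a <= u <= b) f y l -> l = 0.
Proof.
intros Hab Hy Hf Hd.
destruct (Req_dec l 0) as [Hl | Hl]; [exact Hl | exfalso].
assert (Habs : 0 < Rabs l) by (apply Rabs_pos_lt, Hl).
destruct (Hd (Rabs l / 2) ltac:(lra)) as [d [Hd0 Hd']].
set (s := Rmin (d / 2) ((b - a) / 2)).
assert (Hs : 0 < s /\ s < d /\ s <= (b - a) / 2).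
{ unfold s; pose proof (Rmin_l (d / 2) ((b - a) / 2));
  pose proof (Rmin_r (d / 2) ((b - a) / 2)).
  repeat split; try lra; apply Rmin_glb_lt; lra. }
set (u := if Rle_dec y ((a + b) / 2) then y + s else y - s).
assert (Hu : a <= u <= b /\ Rabs (u - y) = s).
{ unfold u; destruct (Rle_dec y ((a + b) / 2)).
  - split; [lra |]. replace (y + s - y) with s by ring. apply Rabs_right; lra.
  - split; [lra |]. replace (y - s - y) with (- s) by ring.
    rewrite Rabs_Ropp; apply Rabs_right; lra. }
destruct Hu as [Hu Hus].
specialize (Hd' u Hu ltac:(lra)).
rewrite (Hf u Hu), (Hf y Hy) in Hd'.
replace (c - c - l * (u - y)) with (- (l * (u - y))) in Hd' by ring.
rewrite Rabs_Ropp, Rabs_mult, Hus in Hd'. nra.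
Qed.

Lemma Int2Sigma_open x y : Int2Sigma x y -> locally_2d Int2Sigma x y.
Proof.
unfold Int2Sigma; intros [Hx Hy].
set (d := Rmin (Rmin (2 - x) (x + 2)) (Rmin (2 - y) (y + 2))).
assert (Hd : 0 < d) by (unfold d; repeat apply Rmin_glb_lt; lra).
exists (mkposreal d Hd). simpl. intros u v Hu Hv.
pose proof (Rmin_l (Rmin (2 - x) (x + 2)) (Rmin (2 - y) (y + 2))).
pose proof (Rmin_r (Rmin (2 - x) (x + 2)) (Rmin (2 - y) (y + 2))).
pose proof (Rmin_l (2 - x) (x + 2)); pose proof (Rmin_r (2 - x) (x + 2)).
pose proof (Rmin_l (2 - y) (y + 2)); pose proof (Rmin_r (2 - y) (y + 2)).
unfold d in Hu, Hv. apply Rabs_def2 in Hu; apply Rabs_def2 in Hv. lra.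
Qed.

Lemma Sigma_Int2Sigma x y : Sigma x y -> Int2Sigma x y.
Proof. unfold Sigma, Int2Sigma; lra. Qed.

(* If both partial derivatives of f are bounded by B on (-2,2)^2, then on
   Sigma the function stays within 2B of its value at the origin
   (integrate along the path (0,0) -> (x,0) -> (x,y)). *)
Lemma square_oscillation_bound (f fx fy : R -> R -> R) B :
  (forall x y, Int2Sigma x y -> is_derive (fun u => f u y) x (fx x y)) ->
  (forall x y, Int2Sigma x y -> is_derive (fun u => f x u) y (fy x y)) ->
  (forall x y, Int2Sigma x y -> Rabs (fx x y) <= B) ->
  (forall x y, Int2Sigma x y -> Rabs (fy x y) <= B) ->
  forall x y, Sigma x y -> Rabs (f x y - f 0 0) <= 2 * B.
Proof.
intros Hfx Hfy Bx By x y [Hx Hy].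
assert (Hseg : forall a t, -1 <= a <= 1 -> Rmin 0 a <= t <= Rmax 0 a -> -2 < t < 2).
{ intros a t Ha Ht. pose proof (between_abs 0 a t Ht) as Hd.
  rewrite !Rminus_0_r in Hd.
  assert (Rabs a <= 1) by (apply Rabs_le; lra).
  assert (Ht1 : Rabs t <= 1) by lra. apply Rabs_le_bounds in Ht1. lra. }
assert (Hvert : Rabs (f x y - f x 0) <= B * Rabs (y - 0)).
{ apply (mvt_abs_bound (fun u => f x u) (fun u => fy x u)); intros t Ht.
  - apply Hfy. split; [lra | exact (Hseg y t Hy Ht)].
  - apply By. split; [lra | exact (Hseg y t Hy Ht)]. }
assert (Hhor : Rabs (f x 0 - f 0 0) <= B * Rabs (x - 0)).
{ apply (mvt_abs_bound (fun u => f u 0) (fun u => fx u 0)); intros t Ht.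
  - apply Hfx. split; [exact (Hseg x t Hx Ht) | lra].
  - apply Bx. split; [exact (Hseg x t Hx Ht) | lra]. }
assert (HB : 0 <= B).
{ eapply Rle_trans; [apply Rabs_pos | apply (Bx 0 0)]. unfold Int2Sigma; lra. }
rewrite Rminus_0_r in Hvert, Hhor.
assert (Rabs x <= 1) by (apply Rabs_le; lra).
assert (Rabs y <= 1) by (apply Rabs_le; lra).
replace (f x y - f 0 0) with ((f x y - f x 0) + (f x 0 - f 0 0)) by ring.
eapply Rle_trans; [apply Rabs_triang |]. nra.
Qed.

Lemma is_derive_t2_shape (f g : R -> R) x a b C0 C1 A1 :
  is_derive f x a -> is_derive g x b ->
  is_derive (fun t => f t - C0 - A1 * (g t - C1)) x (a - A1 * b).
Proof.
intros Hf Hg. auto_derive.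
- split; [eexists; exact Hf | split; [eexists; exact Hg | auto]].
- rewrite (is_derive_unique (fun t : R => f t) x a Hf),
          (is_derive_unique (fun t : R => g t) x b Hg). ring.
Qed.

Section HyperbolicPhase.

Variable M : nat.
Variable phi : R -> R -> R.
Hypothesis HM : (3 <= M)%nat.
Hypothesis Hphi : Hyp M phi.

Lemma Hyp_is_derive_x w x y : (length w <= 2)%nat -> Int2Sigma x y ->
  is_derive (fun u => dword w phi u y) x (dword (true :: w) phi x y).
Proof.
intros Hw Hxy. apply Derive_correct.
destruct Hphi as [[Hd _] _]. apply (Hd w ltac:(lia) x y Hxy).
Qed.

Lemma Hyp_is_derive_y w x y : (length w <= 2)%nat -> Int2Sigma x y ->
  is_derive (fun u => dword w phi x u) y (dword (false :: w) phi x y).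
Proof.
intros Hw Hxy. apply Derive_correct.
destruct Hphi as [[Hd _] _]. apply (Hd w ltac:(lia) x y Hxy).
Qed.

Lemma Hyp_continuous w x y : (length w <= 3)%nat -> Int2Sigma x y ->
  continuity_2d_pt (dword w phi) x y.
Proof.
intros Hw Hxy eps. destruct Hphi as [[_ Hc] _].
destruct (Hc w ltac:(lia) eps (cond_pos eps)) as [d1 [Hd1 Huc]].
destruct (Int2Sigma_open x y Hxy) as [d2 Hin].
assert (Hd : 0 < Rmin d1 d2) by (apply Rmin_glb_lt; [lra | apply cond_pos]).
exists (mkposreal _ Hd). simpl. intros u v Hu Hv.
pose proof (Rmin_l d1 d2); pose proof (Rmin_r d1 d2).
apply Huc; [exact Hxy | apply Hin; lra | lra | lra].
Qed.

Lemma Hyp_mixed_commute w x y : (length w <= 1)%nat -> Int2Sigma x y ->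
  dX (dY (dword w phi)) x y = dY (dX (dword w phi)) x y.
Proof.
intros Hw Hxy. unfold dX, dY. apply Schwarz.
- destruct (Int2Sigma_open x y Hxy) as [d Hin].
  exists d. intros u v Hu Hv. pose proof (Hin u v Hu Hv) as Huv.
  destruct Hphi as [[Hd _] _].
  split; [apply (Hd w ltac:(lia) u v Huv) |].
  split; [apply (Hd w ltac:(lia) u v Huv) |].
  split; [apply (Hd (false :: w) ltac:(simpl; lia) u v Huv) |].
  apply (Hd (true :: w) ltac:(simpl; lia) u v Huv).
- apply (Hyp_continuous (true :: false :: w)); [simpl; lia | exact Hxy].
- apply (Hyp_continuous (false :: true :: w)); [simpl; lia | exact Hxy].
Qed.

(* The third-order bound of Hyp; the next two lemmas transfer it, via
   Schwarz, to the orderings d_y d_x d_x and d_y d_x d_y used below. *)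
Lemma Hyp_third_bound a b x y : (a + b = 3)%nat -> Int2Sigma x y ->
  Rabs (pd a b phi x y) <= 1 / 100000.
Proof.
intros Hab Hxy. destruct Hphi as [_ [_ [_ [_ [_ [_ [_ [_ Hb]]]]]]]].
apply Hb; [lia | lia | exact Hxy].
Qed.

Lemma Hyp_third_bound_yxx x y : Int2Sigma x y ->
  Rabs (dY (dX (dX phi)) x y) <= 1 / 100000.
Proof.
intros Hxy.
rewrite <- (Hyp_mixed_commute (true :: nil)) by (simpl; lia || exact Hxy).
change (Rabs (dX (dY (dX phi)) x y) <= 1 / 100000).
replace (dX (dY (dX phi)) x y) with (pd 2 1 phi x y).
- exact (Hyp_third_bound 2 1 x y eq_refl Hxy).
- unfold pd. simpl. unfold dX at 1 3. apply Derive_ext_loc.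
  destruct (Int2Sigma_open x y Hxy) as [d Hin].
  exists d. intros t Ht.
  apply (Hyp_mixed_commute nil); [simpl; lia |].
  apply Hin; [exact Ht | rewrite Rminus_diag, Rabs_R0; apply cond_pos].
Qed.

Lemma Hyp_third_bound_yxy x y : Int2Sigma x y ->
  Rabs (dY (dX (dY phi)) x y) <= 1 / 100000.
Proof.
intros Hxy.
rewrite <- (Hyp_mixed_commute (false :: nil)) by (simpl; lia || exact Hxy).
exact (Hyp_third_bound 1 2 x y eq_refl Hxy).
Qed.

Lemma Hyp_second_deriv_oscillation w x y : (length w = 2)%nat ->
  (forall x y, Int2Sigma x y -> Rabs (dword (true :: w) phi x y) <= 1 / 100000) ->
  (forall x y, Int2Sigma x y -> Rabs (dword (false :: w) phi x y) <= 1 / 100000) ->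
  Sigma x y -> Rabs (dword w phi x y - dword w phi 0 0) <= 2 / 100000.
Proof.
intros Hw Bx By Hxy.
replace (2 / 100000) with (2 * (1 / 100000)) by field.
apply (square_oscillation_bound _ (dword (true :: w) phi) (dword (false :: w) phi));
  auto; intros u v Huv.
- apply Hyp_is_derive_x; [lia | exact Huv].
- apply Hyp_is_derive_y; [lia | exact Huv].
Qed.

Lemma Hyp_second_derivs x y : Sigma x y ->
  Rabs (phi_xx phi x y) <= 2 / 100000 /\
  Rabs (phi_xy phi x y - 1) <= 2 / 100000 /\
  Rabs (phi_yy phi x y) <= 2 / 100000.
Proof.
intros Hxy.
destruct Hphi as [_ [_ [_ [_ [Hxx0 [Hxy0 [_ [Hyy0 _]]]]]]]].
unfold phi_xx, phi_xy, phi_yy.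
split; [| split].
- rewrite <- (Rminus_0_r (dX (dX phi) x y)), <- Hxx0.
  apply (Hyp_second_deriv_oscillation (true :: true :: nil)); auto.
  + intros u v Huv. exact (Hyp_third_bound 3 0 u v eq_refl Huv).
  + exact Hyp_third_bound_yxx.
- rewrite <- Hxy0.
  apply (Hyp_second_deriv_oscillation (true :: false :: nil)); auto.
  + intros u v Huv. exact (Hyp_third_bound 2 1 u v eq_refl Huv).
  + exact Hyp_third_bound_yxy.
- rewrite <- (Rminus_0_r (dY (dY phi) x y)), <- Hyy0.
  apply (Hyp_second_deriv_oscillation (false :: false :: nil)); auto.
  + intros u v Huv. exact (Hyp_third_bound 1 2 u v eq_refl Huv).
  + intros u v Huv. exact (Hyp_third_bound 0 3 u v eq_refl Huv).
Qed.

(* From here on t = t2 phi x1 y1, the function whose level curves are the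
   curves y |-> (h(v,y), y). *)
Variables x1 y1 : R.
Let A1 := Afun phi x1 y1.

Lemma t2_differentiable x y : Int2Sigma x y ->
  differentiable_pt_lim (t2 phi x1 y1) x y
    (phi_xy phi x y - A1 * phi_xx phi x y) (phi_yy phi x y - A1 * phi_xy phi x y).
Proof.
intros Hxy.
apply (partials_differentiable _ (fun u v => phi_xy phi u v - A1 * phi_xx phi u v)).
- destruct (Int2Sigma_open x y Hxy) as [d Hin]. exists d. intros u v Hu Hv.
  apply is_derive_t2_shape.
  + apply (Hyp_is_derive_x (false :: nil)); [simpl; lia | auto].
  + apply (Hyp_is_derive_x (true :: nil)); [simpl; lia | auto].
- apply continuity_2d_pt_minus.
  + apply (Hyp_continuous (true :: false :: nil)); [simpl; lia | exact Hxy].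
  + apply continuity_2d_pt_mult; [apply continuity_2d_pt_const |].
    apply (Hyp_continuous (true :: true :: nil)); [simpl; lia | exact Hxy].
- unfold phi_xy.
  rewrite (Hyp_mixed_commute nil) by (simpl; lia || exact Hxy).
  apply is_derive_t2_shape.
  + apply (Hyp_is_derive_y (false :: nil)); [simpl; lia | exact Hxy].
  + apply (Hyp_is_derive_y (true :: nil)); [simpl; lia | exact Hxy].
Qed.

Lemma level_curve_tangent (g : R -> R) gy v y :
  (forall u, -1 <= u <= 1 -> t2 phi x1 y1 (g u) u = v) ->
  has_deriv_within (fun u => -1 <= u <= 1) g y gy ->
  -1 <= y <= 1 -> Sigma (g y) y ->
  (phi_xy phi (g y) y - A1 * phi_xx phi (g y) y) * gy
    + (phi_yy phi (g y) y - A1 * phi_xy phi (g y) y) = 0.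
Proof.
intros Hlevel Hg Hy Hsig.
apply (deriv_within_const (fun u => t2 phi x1 y1 (g u) u) (-1) 1 v y);
  [lra | exact Hy | exact Hlevel |].
apply chain_rule_within; [exact Hg |].
apply t2_differentiable, Sigma_Int2Sigma, Hsig.
Qed.

End HyperbolicPhase.

Lemma hyperbolic_root (pxx pxy pyy : R) :
  Rabs pxx <= 2 / 100000 -> Rabs (pxy - 1) <= 2 / 100000 -> Rabs pyy <= 2 / 100000 ->
  let A := pyy / (pxy + sqrt (pxy ^ 2 - pxx * pyy)) in
  Rabs A <= 3 / 100000 /\ pxx * A ^ 2 - 2 * pxy * A + pyy = 0.
Proof.
intros Hxx Hxy Hyy A.
apply Rabs_le_bounds in Hxx; apply Rabs_le_bounds in Hxy; apply Rabs_le_bounds in Hyy.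
assert (Hdisc : 0 <= pxy ^ 2 - pxx * pyy) by nra.
set (s := sqrt (pxy ^ 2 - pxx * pyy)) in *.
assert (Hs0 : 0 <= s) by apply sqrt_pos.
assert (Hs2 : s * s = pxy ^ 2 - pxx * pyy) by (apply sqrt_sqrt; exact Hdisc).
set (den := pxy + s) in *.
assert (Hden : 1 - 2 / 100000 <= den) by (unfold den; lra).
split.
- assert (HAd : A * den = pyy) by (unfold A; field; lra).
  apply Rabs_le; split; nra.
- unfold A.
  replace (pxx * (pyy / den) ^ 2 - 2 * pxy * (pyy / den) + pyy)
    with (pyy / den ^ 2 * (pxx * pyy - 2 * pxy * den + den ^ 2)) by (field; lra).
  replace (pxx * pyy - 2 * pxy * den + den ^ 2) with 0 by (unfold den; nra). ring.
Qed.

(* If (s, 1) is orthogonal to (pxy - A1 pxx, pyy - A1 pxy), where A solves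
   the quadratic for the Hessian (pxx, pxy, pyy), then s is within 3 |A - A1|
   of - A1: indeed (pxy - A1 pxx)(s + A1) = (A - A1)(pxx (A + A1) - 2 pxy). *)
Lemma slope_estimate (pxx pxy pyy A A1 s S : R) :
  Rabs pxx <= 2 / 100000 -> Rabs (pxy - 1) <= 2 / 100000 ->
  Rabs A <= 3 / 100000 -> Rabs A1 <= 3 / 100000 ->
  pxx * A ^ 2 - 2 * pxy * A + pyy = 0 ->
  (pxy - A1 * pxx) * s + (pyy - A1 * pxy) = 0 ->
  Rabs (A - A1) <= S ->
  Rabs (s - - A1) <= 3 * S.
Proof.
intros Hxx Hxy HA HA1 Hroot Horth HS.
set (Fx := pxy - A1 * pxx) in *.
assert (HFE : Fx * (s - - A1) = (A - A1) * (pxx * (A + A1) - 2 * pxy)).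
{ unfold Fx in *. nra. }
apply Rabs_le_bounds in Hxx; apply Rabs_le_bounds in Hxy;
apply Rabs_le_bounds in HA; apply Rabs_le_bounds in HA1.
assert (HFx : 9 / 10 <= Fx) by (unfold Fx; nra).
assert (Hm : Rabs (pxx * (A + A1) - 2 * pxy) <= 21 / 10) by (apply Rabs_le; nra).
assert (Habs : Fx * Rabs (s - - A1) = Rabs (A - A1) * Rabs (pxx * (A + A1) - 2 * pxy)).
{ rewrite <- (Rabs_right Fx) by lra. rewrite <- !Rabs_mult, HFE. reflexivity. }
pose proof (Rabs_pos (s - - A1)). pose proof (Rabs_pos (A - A1)).
pose proof (Rabs_pos (pxx * (A + A1) - 2 * pxy)).
assert (Fx * Rabs (s - - A1) <= S * (21 / 10)) by (rewrite Habs; apply Rmult_le_compat; lra).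
nra.
Qed.

Lemma level_set_as_curves (t : R -> R -> R) (h : R -> R -> R) alpha beta r :
  (forall v y, Rect alpha beta v y -> t (h v y) y = v) ->
  (forall x y, Sigma x y -> exists v, alpha <= v <= beta /\ h v y = x) ->
  forall x y,
    (Sigma x y /\ Rabs (t x y) <= r) <->
    (exists v, alpha <= v <= beta /\ Rabs v <= r /\ Sigma x y /\ x = h v y).
Proof.
intros Hlevel Hsurj x y. split.
- intros [Hs Hr]. destruct (Hsurj x y Hs) as [v [Hv Hx]].
  assert (Hrect : Rect alpha beta v y) by (split; [exact Hv | apply Hs]).
  pose proof (Hlevel v y Hrect) as Ht. rewrite Hx in Ht. rewrite Ht in Hr.
  exists v. auto.
- intros [v [Hv [Hr [Hs ->]]]].
  assert (Hrect : Rect alpha beta v y) by (split; [exact Hv | apply Hs]).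
  rewrite (Hlevel v y Hrect). auto.
Qed.

Theorem mainTheorem11 :
  exists K0 : R,
  forall (M : nat) (phi : R -> R -> R) (x1 y1 mu K alpha beta : R) (h hy : R -> R -> R),
    (3 <= M)%nat ->
    Hyp M phi ->
    Sigma x1 y1 ->
    1 <= mu ->
    K0 <= K ->
    (exists x y, Sigma x y /\ t2 phi x1 y1 x y = alpha) ->
    (forall x y, Sigma x y -> alpha <= t2 phi x1 y1 x y) ->
    (exists x y, Sigma x y /\ t2 phi x1 y1 x y = beta) ->
    (forall x y, Sigma x y -> t2 phi x1 y1 x y <= beta) ->
    lemma_h phi x1 y1 alpha beta h hy ->
    (forall x y,
       (Sigma x y /\ Rabs (t2 phi x1 y1 x y) <= 100 * sqrt mu / K)
       <->
       (exists v, alpha <= v <= beta /\ Rabs v <= 100 * sqrt mu / K /\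
                  Sigma x y /\ x = h v y))
    /\
    (forall v y, alpha <= v <= beta -> -1 <= y <= 1 ->
       (Sigma (h v y) y /\ Rabs (t2 phi x1 y1 (h v y) y) <= 100 * sqrt mu / K) ->
       (Sigma (h v y) y /\
          Rabs (Afun phi (h v y) y - Afun phi x1 y1) <= sqrt mu * Rpower K (-3/4)) ->
       sqrt ((hy v y - (- Afun phi x1 y1)) ^ 2 + (1 - 1) ^ 2)
         <= 3 * sqrt mu * Rpower K (-3/4)).
Proof.
exists 1.
intros M phi x1 y1 mu K alpha beta h hy HM Hphi Hz1 _ _ _ _ _ _ Hh.
destruct Hh as [Hlevel [_ [Hsurj [hv Hderiv]]]].
split; [exact (level_set_as_curves _ h alpha beta _ Hlevel Hsurj) |].
intros v y Hv Hy [Hsig _] [_ HA].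
assert (Horth := level_curve_tangent M phi HM Hphi x1 y1 (h v) (hy v y) v y
  (fun u Hu => Hlevel v u (conj Hv Hu)) (proj1 (proj2 (Hderiv v y (conj Hv Hy)))) Hy Hsig).
replace ((1 - 1) ^ 2) with 0 by ring.
rewrite Rplus_0_r, <- Rsqr_pow2, sqrt_Rsqr_abs, Rmult_assoc.
destruct (Hyp_second_derivs M phi HM Hphi _ _ Hsig) as [Hxx [Hxy Hyy]].
destruct (Hyp_second_derivs M phi HM Hphi _ _ Hz1) as [Hxx1 [Hxy1 Hyy1]].
destruct (hyperbolic_root _ _ _ Hxx Hxy Hyy) as [HAz Hroot].
destruct (hyperbolic_root _ _ _ Hxx1 Hxy1 Hyy1) as [HA1 _].
exact (slope_estimate _ _ _ _ _ _ _ Hxx Hxy HAz HA1 Hroot Horth HA).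
Qed.
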